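(* A term $t$ of the silly substitution calculus is weakly $\to_w$-normalizing if and only if it is strongly $\to_w$-normalizing.
   Context: Terms: $t ::= x \mid \lambda x.t \mid t\,u \mid t[x\backslash u]$ ($t[x\backslash u]$ an explicit substitution binding $x$ in $t$; terms up to $\alpha$). Values $v ::= \lambda x.t$. Substitution contexts $S ::= \langle\cdot\rangle\mid S[x\backslash u]$. Weak contexts $W ::= \langle\cdot\rangle \mid W\,t \mid t\,W \mid t[x\backslash W] \mid W[x\backslash u]$; $W\langle\langle t\rangle\rangle$ is plugging without capture of free variables of $t$. Root rules: $S\langle\lambda x.t\rangle u\mapsto_m S\langle t[x\backslash u]\rangle$; $W\langle\langle x\rangle\rangle[x\backslash u]\mapsto_e W\langle\langle u\rangle\rangle[x\backslash u]$; $t[x\backslash S\langle v\rangle]\mapsto_{gcv} S\langle t\rangle$ if $x\notin\mathrm{fv}(t)$. $\to_w$ is the union of their closures under weak contexts. Weakly normalizing: some reduction sequence reaches a normal form; strongly normalizing: no infinite reduction sequence. *)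

(* Silly substitution calculus, weak reduction ->_w.
   Terms up to alpha-equivalence are represented with de Bruijn indices. *)
From Stdlib Require Import Arith Relations.

(* t ::= x | \x.t | t u | t[x\u]   ;  in [ES t u] index 0 of [t] is bound
   (the explicit substitution [t[x\u]]), [u] is outside the binder. *)
Inductive term : Type :=
| Var : nat -> term
| Lam : term -> term
| App : term -> term -> term
| ES  : term -> term -> term.

Fixpoint lift (k c : nat) (t : term) : term :=
  match t with
  | Var n => if c <=? n then Var (n + k) else Var n
  | Lam t => Lam (lift k (S c) t)
  | App t u => App (lift k c t) (lift k c u)
  | ES t u => ES (lift k (S c) t) (lift k c u)
  end.

(* decrement the indices > c (used when index c does not occur) *)
Fixpoint lower (c : nat) (t : term) : term :=
  match t with
  | Var n => if c <? n then Var (n - 1) else Var n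
  | Lam t => Lam (lower (S c) t)
  | App t u => App (lower c t) (lower c u)
  | ES t u => ES (lower (S c) t) (lower c u)
  end.

Fixpoint occurs (n : nat) (t : term) : bool :=
  match t with
  | Var m => Nat.eqb n m
  | Lam t => occurs (S n) t
  | App t u => occurs n t || occurs n u
  | ES t u => occurs (S n) t || occurs n u
  end.

Definition is_value (t : term) : Prop := exists b, t = Lam b.

Inductive sctx : Type :=
| SHole : sctx
| SES : sctx -> term -> sctx.

Fixpoint plugS (s : sctx) (t : term) : term :=
  match s with
  | SHole => t
  | SES s u => ES (plugS s t) u
  end.

Fixpoint depthS (s : sctx) : nat :=
  match s with
  | SHole => 0
  | SES s _ => S (depthS s)
  end.

Inductive wctx : Type :=
| WHole : wctx
| WAppL : wctx -> term -> wctx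
| WAppR : term -> wctx -> wctx
| WESR  : term -> wctx -> wctx
| WESL  : wctx -> term -> wctx.

Fixpoint plugW (w : wctx) (t : term) : term :=
  match w with
  | WHole => t
  | WAppL w u => App (plugW w t) u
  | WAppR u w => App u (plugW w t)
  | WESR u w => ES u (plugW w t)
  | WESL w u => ES (plugW w t) u
  end.

Fixpoint depthW (w : wctx) : nat :=
  match w with
  | WHole => 0
  | WAppL w _ => depthW w
  | WAppR _ w => depthW w
  | WESR _ w => depthW w
  | WESL w _ => S (depthW w)
  end.

(* Root rules.  Capture-free plugging W<<t>> is rendered by lifting t over
   the depthW W binders of W. *)
Inductive root : term -> term -> Prop :=
| root_m : forall (s : sctx) (t u : term),
    (* S<\x.t> u  |->  S<t[x\u]> *)
    root (App (plugS s (Lam t)) u) (plugS s (ES t (lift (depthS s) 0 u)))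
| root_e : forall (w : wctx) (u : term),
    (* W<<x>>[x\u]  |->  W<<u>>[x\u] *)
    root (ES (plugW w (Var (depthW w))) u)
         (ES (plugW w (lift (S (depthW w)) 0 u)) u)
| root_gcv : forall (t : term) (s : sctx) (v : term),
    (* t[x\S<v>]  |->  S<t>   if x not free in t *)
    is_value v -> occurs 0 t = false ->
    root (ES t (plugS s v)) (plugS s (lift (depthS s) 0 (lower 0 t))).

Definition wstep (t t' : term) : Prop :=
  exists (w : wctx) (r r' : term), root r r' /\ t = plugW w r /\ t' = plugW w r'.

Definition wnormal (t : term) : Prop := ~ exists t', wstep t t'.

Definition weakly_normalizing (t : term) : Prop :=
  exists t', clos_refl_trans term wstep t t' /\ wnormal t'.

Definition strongly_normalizing (t : term) : Prop :=
  Acc (fun a b => wstep b a) t.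

From Stdlib Require Import Arith Lia Relations Wellfounded Classical.

(* The point is conservation: if [t ->_w t'] and [t'] is strongly normalizing,
   so is [t]; strong normalization then travels backwards along a normalizing
   reduction, while the converse holds by reducing as long as possible.
   For conservation, mark in [t] the residuals of the contracted redex.  The
   development of a marked term contracts all its marked redexes, and the
   development of [t] is [t'].  Any step of a marked term either keeps its
   development and lowers its weight (the number of marked redexes, counted
   with the multiplicity that pending substitutions will give them), or makes
   at least one step on the development; conclude by lexicographic induction. *)

Ltac nat_cases :=
  repeat match goal with
  | |- context [?a <=? ?b] => destruct (Nat.leb_spec a b)
  | |- context [?a <? ?b] => destruct (Nat.ltb_spec a b)
  | H : context [?a <=? ?b] |- _ => destruct (Nat.leb_spec a b)
  | H : context [?a <? ?b] |- _ => destruct (Nat.ltb_spec a b)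
  end.

(** * De Bruijn shifting *)

Lemma lift_0 t c : lift 0 c t = t.
Proof. revert c; induction t; intros; simpl; nat_cases; f_equal; auto; lia. Qed.

Lemma lift_lift t a b c c' : c <= c' <= c + b ->
  lift a c' (lift b c t) = lift (a + b) c t.
Proof.
  revert a b c c'; induction t; intros; simpl.
  - nat_cases; simpl; nat_cases; f_equal; lia.
  - f_equal; apply IHt; lia.
  - f_equal; auto.
  - f_equal; [apply IHt1 | apply IHt2]; lia.
Qed.

Lemma lift_lift_comm t a b c c' : c' <= c ->
  lift a c' (lift b c t) = lift b (c + a) (lift a c' t).
Proof.
  revert a b c c'; induction t; intros; simpl.
  - nat_cases; simpl; nat_cases; f_equal; lia.
  - f_equal. replace (S (c + a)) with (S c + a) by lia. apply IHt; lia.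
  - f_equal; auto.
  - f_equal; [replace (S (c + a)) with (S c + a) by lia; apply IHt1 | apply IHt2]; lia.
Qed.

Lemma lift1_lift t k c : lift 1 0 (lift k c t) = lift k (S c) (lift 1 0 t).
Proof. rewrite lift_lift_comm by lia. f_equal; lia. Qed.

Lemma lift_lift1 t d : lift d 0 (lift 1 0 t) = lift (S d) 0 t.
Proof. rewrite lift_lift by lia. f_equal; lia. Qed.

Lemma lower_lift t c : lower c (lift 1 c t) = t.
Proof. revert c; induction t; intros; simpl; nat_cases; simpl; nat_cases; f_equal; auto; lia. Qed.

Lemma occurs_lift t c : occurs c (lift 1 c t) = false.
Proof.
  revert c; induction t; intros; simpl; nat_cases; simpl;
    rewrite ?IHt, ?IHt1, ?IHt2; auto; apply Nat.eqb_neq; lia.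
Qed.

Lemma lift_lower t c : occurs c t = false -> lift 1 c (lower c t) = t.
Proof.
  revert c; induction t; intros c H; simpl in *.
  - apply Nat.eqb_neq in H. nat_cases; simpl; nat_cases; f_equal; lia.
  - f_equal; auto.
  - apply Bool.orb_false_iff in H as [? ?]. f_equal; auto.
  - apply Bool.orb_false_iff in H as [? ?]. f_equal; auto.
Qed.

Lemma lift_inj t t' k c : lift k c t = lift k c t' -> t = t'.
Proof.
  revert t' k c; induction t; destruct t'; intros k c H; simpl in *; nat_cases;
    try discriminate; injection H; intros; subst; f_equal; eauto; lia.
Qed.

Lemma lift_inv_Var t k c n : lift k c t = Var n ->
  exists m, t = Var m /\ n = (if c <=? m then m + k else m).
Proof.
  destruct t; simpl; intros H; nat_cases; try discriminate; injection H; intros; subst;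
    eexists; split; eauto; nat_cases; lia.
Qed.

Lemma lift_inv_Lam t k c b : lift k c t = Lam b ->
  exists b0, t = Lam b0 /\ b = lift k (S c) b0.
Proof.
  destruct t; simpl; intros H; nat_cases; try discriminate; injection H; intros; subst; eauto.
Qed.

Lemma lift_inv_App t k c a b : lift k c t = App a b ->
  exists a0 b0, t = App a0 b0 /\ a = lift k c a0 /\ b = lift k c b0.
Proof.
  destruct t; simpl; intros H; nat_cases; try discriminate; injection H; intros; subst; eauto.
Qed.

Lemma lift_inv_ES t k c a b : lift k c t = ES a b ->
  exists a0 b0, t = ES a0 b0 /\ a = lift k (S c) a0 /\ b = lift k c b0.
Proof.
  destruct t; simpl; intros H; nat_cases; try discriminate; injection H; intros; subst; eauto.
Qed.

Lemma lift1_lift_inv y t k j c : lift 1 j t = lift k (S (j + c)) y ->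
  exists y0, y = lift 1 j y0 /\ t = lift k (j + c) y0.
Proof.
  revert t j; induction y; intros t j H;
    destruct t; cbn [lift] in H; nat_cases; try discriminate; injection H; intros; subst.
  all: try solve [ lia
                 | exists (Var n); cbn [lift]; split; nat_cases; f_equal; lia
                 | exists (Var n0); cbn [lift]; split; nat_cases; f_equal; lia
                 | exists (Var (n - 1)); cbn [lift]; split; nat_cases; f_equal; lia ].
  - destruct (IHy t (S j)) as [y0 [-> ->]]; [simpl; auto|]. exists (Lam y0); auto.
  - destruct (IHy1 t1 j) as [a [-> ->]]; auto.
    destruct (IHy2 t2 j) as [b [-> ->]]; auto. exists (App a b); auto.
  - destruct (IHy1 t1 (S j)) as [a [-> ->]]; auto.
    destruct (IHy2 t2 j) as [b [-> ->]]; auto. exists (ES a b); auto.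
Qed.

(** * Answers and the reduction relation *)

Fixpoint is_answer (x : term) : Prop :=
  match x with Lam _ => True | ES y _ => is_answer y | _ => False end.

(* [m_contract (S<\y.b>) u = S<b[y\u]>] and [gc_contract t (S<v>) = S<t>],
   with the shifts that crossing the binders of [S] requires; both are meaningful
   only for an answer [x]. *)
Fixpoint m_contract (x u : term) : term :=
  match x with
  | Lam b => ES b u
  | ES y e => ES (m_contract y (lift 1 0 u)) e
  | _ => App x u
  end.

Fixpoint gc_contract (t x : term) : term :=
  match x with
  | Lam _ => t
  | ES y e => ES (gc_contract (lift 1 0 t) y) e
  | _ => ES (lift 1 0 t) x
  end.

Lemma is_answer_lift x k c : is_answer x -> is_answer (lift k c x).
Proof. revert c; induction x; simpl; intros; nat_cases; auto. Qed.

Lemma is_answer_unlift x k c : is_answer (lift k c x) -> is_answer x.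
Proof. revert c; induction x; simpl; intros; nat_cases; simpl in *; eauto. Qed.

Lemma is_answer_gc_contract x t : is_answer t -> is_answer (gc_contract t x).
Proof. revert t; induction x; simpl; intros; auto using is_answer_lift. Qed.

Lemma m_contract_lift x u k c :
  lift k c (m_contract x u) = m_contract (lift k c x) (lift k c u).
Proof.
  revert u c; induction x; intros; simpl; nat_cases; simpl; auto.
  rewrite IHx1, lift1_lift. auto.
Qed.

Lemma gc_contract_lift x t k c :
  lift k c (gc_contract t x) = gc_contract (lift k c t) (lift k c x).
Proof.
  revert t c; induction x; intros; simpl; nat_cases; simpl; rewrite ?IHx1, ?lift1_lift; auto.
Qed.

Lemma m_contract_gc_contract x a u :
  m_contract (gc_contract a x) u = gc_contract (m_contract a u) x.
Proof. revert a u; induction x; intros; simpl; rewrite ?IHx1, ?m_contract_lift; auto. Qed.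

Lemma gc_contract_assoc x a y :
  gc_contract (gc_contract a y) x = gc_contract a (gc_contract y x).
Proof. revert a y; induction x; intros; simpl; rewrite ?gc_contract_lift, ?IHx1; auto. Qed.

Lemma is_answer_plugS s b : is_answer (plugS s (Lam b)).
Proof. induction s; simpl; auto. Qed.

Lemma is_answer_plugS_inv x : is_answer x -> exists s b, x = plugS s (Lam b).
Proof.
  induction x; simpl; intros H; try contradiction.
  - exists SHole, x; auto.
  - destruct (IHx1 H) as [s [b ->]]. exists (SES s x2), b. auto.
Qed.

Lemma m_contract_plugS s b u :
  m_contract (plugS s (Lam b)) u = plugS s (ES b (lift (depthS s) 0 u)).
Proof.
  revert u; induction s; intros; simpl.
  - rewrite lift_0. auto.
  - rewrite IHs, lift_lift1. auto.
Qed.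

Lemma gc_contract_plugS s t b :
  gc_contract t (plugS s (Lam b)) = plugS s (lift (depthS s) 0 t).
Proof.
  revert t; induction s; intros; simpl.
  - rewrite lift_0. auto.
  - rewrite IHs, lift_lift1. auto.
Qed.

(* [lsubst1 k u b b']: [b'] is [b] with one free occurrence of index [k] replaced
   by [u], where [u] lives outside [k + 1] binders of [b]. *)
Inductive lsubst1 : nat -> term -> term -> term -> Prop :=
| lsubst1_var k u : lsubst1 k u (Var k) (lift (S k) 0 u)
| lsubst1_appL k u a a' b : lsubst1 k u a a' -> lsubst1 k u (App a b) (App a' b)
| lsubst1_appR k u a b b' : lsubst1 k u b b' -> lsubst1 k u (App a b) (App a b')
| lsubst1_esL k u a a' b : lsubst1 (S k) u a a' -> lsubst1 k u (ES a b) (ES a' b)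
| lsubst1_esR k u a b b' : lsubst1 k u b b' -> lsubst1 k u (ES a b) (ES a b').

Inductive step : term -> term -> Prop :=
| step_m x u : is_answer x -> step (App x u) (m_contract x u)
| step_gc t x : is_answer x -> step (ES (lift 1 0 t) x) (gc_contract t x)
| step_e b b' u : lsubst1 0 u b b' -> step (ES b u) (ES b' u)
| step_appL a a' b : step a a' -> step (App a b) (App a' b)
| step_appR a b b' : step b b' -> step (App a b) (App a b')
| step_esL a a' b : step a a' -> step (ES a b) (ES a' b)
| step_esR a b b' : step b b' -> step (ES a b) (ES a b').

Lemma lsubst1_plugW w k u :
  lsubst1 k u (plugW w (Var (k + depthW w))) (plugW w (lift (S (k + depthW w)) 0 u)).
Proof.
  revert k; induction w; intros; simpl; try constructor; auto.
  - rewrite Nat.add_0_r. constructor.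
  - replace (k + S (depthW w)) with (S k + depthW w) by lia. auto.
Qed.

Lemma lsubst1_plugW_inv k u b b' : lsubst1 k u b b' -> exists w,
  b = plugW w (Var (k + depthW w)) /\ b' = plugW w (lift (S (k + depthW w)) 0 u).
Proof.
  induction 1; try destruct IHlsubst1 as [w [-> ->]].
  - exists WHole. simpl. rewrite Nat.add_0_r. auto.
  - exists (WAppL w b); auto.
  - exists (WAppR a w); auto.
  - exists (WESL w b); simpl. replace (k + S (depthW w)) with (S k + depthW w) by lia. auto.
  - exists (WESR a w); auto.
Qed.

Lemma root_step r r' : root r r' -> step r r'.
Proof.
  destruct 1 as [s t u | w u | t s v [b ->] Ht].
  - rewrite <- m_contract_plugS. constructor. apply is_answer_plugS.
  - constructor. apply (lsubst1_plugW w 0 u).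
  - rewrite <- (lift_lower t 0 Ht) at 1.
    rewrite <- (gc_contract_plugS s _ b). constructor. apply is_answer_plugS.
Qed.

Lemma wstep_step t t' : wstep t t' -> step t t'.
Proof.
  intros [w [r [r' [H [-> ->]]]]].
  induction w; simpl; auto using root_step, step_appL, step_appR, step_esL, step_esR.
Qed.

Fixpoint compW (w1 w2 : wctx) : wctx :=
  match w1 with
  | WHole => w2
  | WAppL w u => WAppL (compW w w2) u
  | WAppR u w => WAppR u (compW w w2)
  | WESR u w => WESR u (compW w w2)
  | WESL w u => WESL (compW w w2) u
  end.

Lemma plugW_compW w1 w2 t : plugW w1 (plugW w2 t) = plugW (compW w1 w2) t.
Proof. induction w1; simpl; f_equal; auto. Qed.

Lemma wstep_plugW w t t' : wstep t t' -> wstep (plugW w t) (plugW w t').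
Proof.
  intros [w' [r [r' [H [-> ->]]]]].
  exists (compW w w'), r, r'. rewrite !plugW_compW. auto.
Qed.

Lemma root_wstep r r' : root r r' -> wstep r r'.
Proof. intros H. exists WHole, r, r'. auto. Qed.

Lemma step_wstep t t' : step t t' -> wstep t t'.
Proof.
  induction 1 as [x u Hx | t x Hx | b b' u Hb | a a' b _ IH | a b b' _ IH
                 | a a' b _ IH | a b b' _ IH].
  - destruct (is_answer_plugS_inv x Hx) as [s [b ->]].
    rewrite m_contract_plugS. apply root_wstep. constructor.
  - destruct (is_answer_plugS_inv x Hx) as [s [b ->]].
    rewrite gc_contract_plugS. rewrite <- (lower_lift t 0) at 2.
    apply root_wstep. constructor; [exists b; auto | apply occurs_lift].
  - destruct (lsubst1_plugW_inv _ _ _ _ Hb) as [w [-> ->]].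
    apply root_wstep. constructor.
  - apply (wstep_plugW (WAppL WHole b) _ _ IH).
  - apply (wstep_plugW (WAppR a WHole) _ _ IH).
  - apply (wstep_plugW (WESL WHole b) _ _ IH).
  - apply (wstep_plugW (WESR a WHole) _ _ IH).
Qed.

Lemma lsubst1_lift j u b b' k c : lsubst1 j u b b' ->
  lsubst1 j (lift k c u) (lift k (S (j + c)) b) (lift k (S (j + c)) b').
Proof.
  induction 1 as [j u | | | j u a a' b _ IH |]; cbn [lift]; try constructor; auto.
  - nat_cases; [lia|].
    replace (lift k (S (j + c)) (lift (S j) 0 u)) with (lift (S j) 0 (lift k c u))
      by (rewrite lift_lift_comm by lia; f_equal; lia).
    constructor.
Qed.

Lemma lsubst1_lift_low j u b b' c : lsubst1 j u b b' -> c <= j ->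
  lsubst1 (S j) u (lift 1 c b) (lift 1 c b').
Proof.
  intros H; revert c; induction H as [j u | | | j u a a' b _ IH |]; intros c Hc;
    cbn [lift]; try constructor; auto.
  - nat_cases; [|lia]. rewrite lift_lift by lia.
    replace (1 + S j) with (S (S j)) by lia. replace (j + 1) with (S j) by lia. constructor.
  - apply IH; lia.
Qed.

Lemma lsubst1_unlift j u0 b0 b' k c : lsubst1 j (lift k c u0) (lift k (S (j + c)) b0) b' ->
  exists b0', lsubst1 j u0 b0 b0' /\ b' = lift k (S (j + c)) b0'.
Proof.
  remember (lift k c u0) as u eqn:Hu; remember (lift k (S (j + c)) b0) as b eqn:Hb.
  intros H; revert b0 c Hu Hb; induction H; intros b0 c' -> Hb; symmetry in Hb.
  - apply lift_inv_Var in Hb as [m [-> Hm]]. nat_cases; [lia|]. subst.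
    eexists; split; [constructor|]. rewrite lift_lift_comm by lia. f_equal; lia.
  - apply lift_inv_App in Hb as [a0 [b1 [-> [-> ->]]]].
    destruct (IHlsubst1 a0 c') as [a1 [? ->]]; auto.
    exists (App a1 b1); split; auto. apply lsubst1_appL; auto.
  - apply lift_inv_App in Hb as [a0 [b1 [-> [-> ->]]]].
    destruct (IHlsubst1 b1 c') as [a1 [? ->]]; auto.
    exists (App a0 a1); split; auto. apply lsubst1_appR; auto.
  - apply lift_inv_ES in Hb as [a0 [b1 [-> [-> ->]]]].
    destruct (IHlsubst1 a0 c') as [a1 [? ->]]; auto.
    exists (ES a1 b1); split; auto. apply lsubst1_esL; auto.
  - apply lift_inv_ES in Hb as [a0 [b1 [-> [-> ->]]]].
    destruct (IHlsubst1 b1 c') as [a1 [? ->]]; auto.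
    exists (ES a0 a1); split; auto. apply lsubst1_esR; auto.
Qed.

Lemma lsubst1_unlift_low j u t b' c : lsubst1 (S j) u (lift 1 c t) b' -> c <= j ->
  exists t', lsubst1 j u t t' /\ b' = lift 1 c t'.
Proof.
  remember (S j) as j' eqn:Hj; remember (lift 1 c t) as b eqn:Hb.
  intros H; revert j c t Hj Hb; induction H; intros j' c' t0 -> Hb Hc; symmetry in Hb.
  - apply lift_inv_Var in Hb as [m [-> Hm]]. nat_cases; [|lia].
    assert (m = j') by lia. subst. eexists; split; [constructor|].
    rewrite lift_lift by lia. f_equal; lia.
  - apply lift_inv_App in Hb as [a0 [b1 [-> [-> ->]]]].
    destruct (IHlsubst1 j' c' a0) as [a1 [? ->]]; auto.
    exists (App a1 b1); split; auto. apply lsubst1_appL; auto.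
  - apply lift_inv_App in Hb as [a0 [b1 [-> [-> ->]]]].
    destruct (IHlsubst1 j' c' b1) as [a1 [? ->]]; auto.
    exists (App a0 a1); split; auto. apply lsubst1_appR; auto.
  - apply lift_inv_ES in Hb as [a0 [b1 [-> [-> ->]]]].
    destruct (IHlsubst1 (S j') (S c') a0) as [a1 [? ->]]; auto; try lia.
    exists (ES a1 b1); split; auto. apply lsubst1_esL; auto.
  - apply lift_inv_ES in Hb as [a0 [b1 [-> [-> ->]]]].
    destruct (IHlsubst1 j' c' b1) as [a1 [? ->]]; auto.
    exists (ES a0 a1); split; auto. apply lsubst1_esR; auto.
Qed.

Lemma lsubst1_lift_absent j u t b' : ~ lsubst1 j u (lift 1 j t) b'.
Proof.
  remember (lift 1 j t) as b eqn:Hb. intros H; revert t Hb.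
  induction H; intros t0 Hb; symmetry in Hb.
  - apply lift_inv_Var in Hb as [m [_ Hm]]; nat_cases; lia.
  - apply lift_inv_App in Hb as [? [? [_ [? _]]]]; eauto.
  - apply lift_inv_App in Hb as [? [? [_ [_ ?]]]]; eauto.
  - apply lift_inv_ES in Hb as [? [? [_ [? _]]]]; eauto.
  - apply lift_inv_ES in Hb as [? [? [_ [_ ?]]]]; eauto.
Qed.

Lemma step_lift t t' k c : step t t' -> step (lift k c t) (lift k c t').
Proof.
  intros H; revert c; induction H; intros c; simpl.
  - rewrite m_contract_lift. constructor. apply is_answer_lift; auto.
  - rewrite gc_contract_lift, <- lift1_lift. constructor. apply is_answer_lift; auto.
  - constructor. apply (lsubst1_lift 0); auto.
  - apply step_appL; auto.
  - apply step_appR; auto.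
  - apply step_esL; auto.
  - apply step_esR; auto.
Qed.

Lemma step_unlift t0 t1 k c : step (lift k c t0) t1 ->
  exists t1', t1 = lift k c t1' /\ step t0 t1'.
Proof.
  remember (lift k c t0) as t eqn:Ht. intros H; revert t0 c Ht.
  induction H; intros t0' c' Ht; symmetry in Ht.
  - apply lift_inv_App in Ht as [a0 [b0 [-> [-> ->]]]].
    exists (m_contract a0 b0). rewrite m_contract_lift. split; auto.
    constructor. eapply is_answer_unlift; eauto.
  - apply lift_inv_ES in Ht as [a0 [b0 [-> [Ha ->]]]].
    destruct (lift1_lift_inv a0 t k 0 c') as [y0 [-> ->]]; auto.
    exists (gc_contract y0 b0). rewrite gc_contract_lift. split; auto.
    constructor. eapply is_answer_unlift; eauto.
  - apply lift_inv_ES in Ht as [a0 [b0 [-> [-> ->]]]].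
    destruct (lsubst1_unlift 0 b0 a0 _ k c' H) as [a1 [? ->]].
    exists (ES a1 b0). split; auto. apply step_e; auto.
  - apply lift_inv_App in Ht as [a0 [b0 [-> [-> ->]]]].
    destruct (IHstep a0 c') as [a1 [-> ?]]; auto.
    exists (App a1 b0); split; auto. apply step_appL; auto.
  - apply lift_inv_App in Ht as [a0 [b0 [-> [-> ->]]]].
    destruct (IHstep b0 c') as [a1 [-> ?]]; auto.
    exists (App a0 a1); split; auto. apply step_appR; auto.
  - apply lift_inv_ES in Ht as [a0 [b0 [-> [-> ->]]]].
    destruct (IHstep a0 (S c')) as [a1 [-> ?]]; auto.
    exists (ES a1 b0); split; auto. apply step_esL; auto.
  - apply lift_inv_ES in Ht as [a0 [b0 [-> [-> ->]]]].
    destruct (IHstep b0 c') as [a1 [-> ?]]; auto.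
    exists (ES a0 a1); split; auto. apply step_esR; auto.
Qed.

Notation steps := (clos_refl_trans term step).
Notation steps1 := (clos_trans term step).

Section ClosureMap.

Variables (A : Type) (R : relation A) (P : A -> Prop) (f : A -> A).
Hypothesis P_stable : forall x y, P x -> R x y -> P y.
Hypothesis f_monotone : forall x y, P x -> R x y -> R (f x) (f y).

Lemma clos_rt_map x y : P x -> clos_refl_trans A R x y -> clos_refl_trans A R (f x) (f y).
Proof.
  intros Hx H. enough (P y /\ clos_refl_trans A R (f x) (f y)) by tauto. revert Hx.
  induction H as [x y H | x | x y z _ IH1 _ IH2]; intros Hx.
  - split; [eauto | apply rt_step; auto].
  - split; [auto | apply rt_refl].
  - destruct (IH1 Hx) as [Hy H1]. destruct (IH2 Hy) as [Hz H2].
    split; [auto | eapply rt_trans; eauto].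
Qed.

Lemma clos_t_map x y : P x -> clos_trans A R x y -> clos_trans A R (f x) (f y).
Proof.
  intros Hx H. enough (P y /\ clos_trans A R (f x) (f y)) by tauto. revert Hx.
  induction H as [x y H | x y z _ IH1 _ IH2]; intros Hx.
  - split; [eauto | apply t_step; auto].
  - destruct (IH1 Hx) as [Hy H1]. destruct (IH2 Hy) as [Hz H2].
    split; [auto | eapply t_trans; eauto].
Qed.

End ClosureMap.

Lemma clos_rt_congr (f : term -> term) x y : (forall a b, step a b -> step (f a) (f b)) ->
  steps x y -> steps (f x) (f y).
Proof. intros Hf. apply (clos_rt_map _ _ (fun _ => True)); auto. Qed.

Lemma clos_t_congr (f : term -> term) x y : (forall a b, step a b -> step (f a) (f b)) ->
  steps1 x y -> steps1 (f x) (f y).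
Proof. intros Hf. apply (clos_t_map _ _ (fun _ => True)); auto. Qed.

Lemma steps_App a a' b b' : steps a a' -> steps b b' -> steps (App a b) (App a' b').
Proof.
  intros Ha Hb. apply rt_trans with (App a' b).
  - apply (clos_rt_congr (fun x => App x b)); auto using step_appL.
  - apply (clos_rt_congr (App a')); auto using step_appR.
Qed.

Lemma steps_ES a a' b b' : steps a a' -> steps b b' -> steps (ES a b) (ES a' b').
Proof.
  intros Ha Hb. apply rt_trans with (ES a' b).
  - apply (clos_rt_congr (fun x => ES x b)); auto using step_esL.
  - apply (clos_rt_congr (ES a')); auto using step_esR.
Qed.

Lemma steps_lift a b k c : steps a b -> steps (lift k c a) (lift k c b).
Proof. apply clos_rt_congr. auto using step_lift. Qed.

Lemma steps1_appL a a' b : steps1 a a' -> steps1 (App a b) (App a' b).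
Proof. apply (clos_t_congr (fun x => App x b)). auto using step_appL. Qed.

Lemma steps1_appR a b b' : steps1 b b' -> steps1 (App a b) (App a b').
Proof. apply clos_t_congr. auto using step_appR. Qed.

Lemma steps1_esL a a' b : steps1 a a' -> steps1 (ES a b) (ES a' b).
Proof. apply (clos_t_congr (fun x => ES x b)). auto using step_esL. Qed.

Lemma steps1_esR a b b' : steps1 b b' -> steps1 (ES a b) (ES a b').
Proof. apply clos_t_congr. auto using step_esR. Qed.

(** * Multiple linear substitution *)

Inductive lsubstn : nat -> term -> nat -> term -> term -> Prop :=
| lsubstn_var_keep k z m : lsubstn k z 0 (Var m) (Var m)
| lsubstn_var k z : lsubstn k z 1 (Var k) (lift (S k) 0 z)
| lsubstn_lam k z b : lsubstn k z 0 (Lam b) (Lam b)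
| lsubstn_app k z n1 n2 a a' b b' : lsubstn k z n1 a a' -> lsubstn k z n2 b b' ->
    lsubstn k z (n1 + n2) (App a b) (App a' b')
| lsubstn_es k z n1 n2 a a' b b' : lsubstn (S k) z n1 a a' -> lsubstn k z n2 b b' ->
    lsubstn k z (n1 + n2) (ES a b) (ES a' b').

Lemma lsubstn_refl t k z : lsubstn k z 0 t t.
Proof.
  revert k; induction t; intros; try constructor.
  - apply (lsubstn_app k z 0 0); auto.
  - apply (lsubstn_es k z 0 0); auto.
Qed.

Lemma lsubstn_cast k z n m a b : lsubstn k z n a b -> n = m -> lsubstn k z m a b.
Proof. intros H <-. auto. Qed.

Lemma lsubstn_0_eq k z n a b : lsubstn k z n a b -> n = 0 -> a = b.
Proof. induction 1; intros; try lia; f_equal; first [apply IHlsubstn1 | apply IHlsubstn2]; lia. Qed.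

Lemma lsubst1_lsubstn k z a b : lsubst1 k z a b -> lsubstn k z 1 a b.
Proof.
  induction 1.
  - constructor.
  - apply (lsubstn_app k u 1 0); auto using lsubstn_refl.
  - apply (lsubstn_app k u 0 1); auto using lsubstn_refl.
  - apply (lsubstn_es k u 1 0); auto using lsubstn_refl.
  - apply (lsubstn_es k u 0 1); auto using lsubstn_refl.
Qed.

Lemma lsubstn_peel k z n a b : lsubstn k z n a b -> 0 < n ->
  exists a1, lsubst1 k z a a1 /\ lsubstn k z (pred n) a1 b.
Proof.
  induction 1 as [| k z | | k z n1 n2 a a' b b' Ha IHa Hb IHb | k z n1 n2 a a' b b' Ha IHa Hb IHb];
    intros Hn; try lia.
  - exists (lift (S k) 0 z). split; [constructor | apply lsubstn_refl].
  - destruct n1 as [|n1].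
    + apply lsubstn_0_eq in Ha as <-; auto.
      destruct (IHb ltac:(lia)) as [b1 [? ?]].
      exists (App a b1). split; [apply lsubst1_appR; auto|].
      apply (lsubstn_app _ _ 0 (pred n2)); auto using lsubstn_refl.
    + destruct (IHa ltac:(lia)) as [a1 [? ?]].
      exists (App a1 b). split; [apply lsubst1_appL; auto|].
      apply (lsubstn_app _ _ n1 n2); auto.
  - destruct n1 as [|n1].
    + apply lsubstn_0_eq in Ha as <-; auto.
      destruct (IHb ltac:(lia)) as [b1 [? ?]].
      exists (ES a b1). split; [apply lsubst1_esR; auto|].
      apply (lsubstn_es _ _ 0 (pred n2)); auto using lsubstn_refl.
    + destruct (IHa ltac:(lia)) as [a1 [? ?]].
      exists (ES a1 b). split; [apply lsubst1_esL; auto|].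
      apply (lsubstn_es _ _ n1 n2); auto.
Qed.

Lemma lsubstn_lsubst1 k z a b : lsubstn k z 1 a b -> lsubst1 k z a b.
Proof.
  intros H. destruct (lsubstn_peel _ _ _ _ _ H) as [a1 [? Hb]]; auto.
  apply lsubstn_0_eq in Hb as <-; auto.
Qed.

Lemma lsubstn_steps1 n z b b' : lsubstn 0 z (S n) b b' -> steps1 (ES b z) (ES b' z).
Proof.
  revert b; induction n; intros b H;
    destruct (lsubstn_peel _ _ _ _ _ H ltac:(lia)) as [b1 [H1 H2]]; simpl in H2.
  - apply lsubstn_0_eq in H2 as <-; auto. apply t_step, step_e; auto.
  - apply t_trans with (ES b1 z); [apply t_step, step_e; auto | auto].
Qed.

Lemma lsubstn_lift j z n b b' k c : lsubstn j z n b b' -> c <= j ->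
  lsubstn (j + k) z n (lift k c b) (lift k c b').
Proof.
  intros H; revert c; induction H; intros c' Hc; cbn [lift].
  - nat_cases; constructor.
  - nat_cases; [|lia]. rewrite lift_lift by lia.
    replace (k + S k0) with (S (k0 + k)) by lia. constructor.
  - constructor.
  - constructor; auto.
  - constructor; auto. apply (IHlsubstn1 (S c')); lia.
Qed.

Lemma lsubstn_lift1 k z n b b' : lsubstn k z n b b' ->
  lsubstn (S k) z n (lift 1 0 b) (lift 1 0 b').
Proof. intros. replace (S k) with (k + 1) by lia. apply lsubstn_lift; auto; lia. Qed.

Lemma lsubstn_m_contract x x' u u' k z n1 n2 : is_answer x ->
  lsubstn k z n1 x x' -> lsubstn k z n2 u u' ->
  lsubstn k z (n1 + n2) (m_contract x u) (m_contract x' u').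
Proof.
  revert x' u u' k n1 n2; induction x; intros x' u u' k n1 n2 Hx H1 H2;
    simpl in Hx; try contradiction; inversion H1; subst; simpl.
  - apply (lsubstn_es k z 0 n2); auto using lsubstn_refl.
  - apply (lsubstn_cast k z ((n0 + n2) + n3)); [|lia].
    constructor; auto. apply IHx1; auto. apply lsubstn_lift1; auto.
Qed.

Lemma lsubstn_gc_contract x x' t t' k z n1 n2 : is_answer x ->
  lsubstn k z n1 t t' -> lsubstn k z n2 x x' ->
  lsubstn k z (n1 + n2) (gc_contract t x) (gc_contract t' x').
Proof.
  revert x' t t' k n1 n2; induction x; intros x' t t' k n1 n2 Hx H1 H2;
    simpl in Hx; try contradiction; inversion H2; subst; simpl.
  - rewrite Nat.add_0_r; auto.
  - apply (lsubstn_cast k z ((n1 + n0) + n3)); [|lia].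
    constructor; auto. apply IHx1; auto. apply lsubstn_lift1; auto.
Qed.

Lemma lsubst1_m_contract x x' u k z : is_answer x -> lsubst1 k z x x' ->
  lsubst1 k z (m_contract x u) (m_contract x' u).
Proof.
  intros. apply lsubstn_lsubst1, (lsubstn_m_contract _ _ _ _ _ _ 1 0);
    auto using lsubst1_lsubstn, lsubstn_refl.
Qed.

Lemma lsubst1_gc_contract x x' t k z : is_answer x -> lsubst1 k z x x' ->
  lsubst1 k z (gc_contract t x) (gc_contract t x').
Proof.
  intros. apply lsubstn_lsubst1, (lsubstn_gc_contract _ _ _ _ _ _ 0 1);
    auto using lsubst1_lsubstn, lsubstn_refl.
Qed.

Lemma lsubst1_answer k z x x' : lsubst1 k z x x' -> is_answer x -> is_answer x'.
Proof. induction 1; simpl; auto; contradiction. Qed.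

(** * Reduction of contracta *)

Lemma step_answer x x' : step x x' -> is_answer x -> is_answer x'.
Proof.
  induction 1; simpl; intros; auto; try contradiction.
  - apply is_answer_gc_contract. eapply is_answer_unlift; eauto.
  - eapply lsubst1_answer; eauto.
Qed.

Lemma step_m_contract_l x x' u : is_answer x -> step x x' ->
  step (m_contract x u) (m_contract x' u).
Proof.
  intros Hx H; revert u Hx; induction H; intros u' Hx; simpl in *; try contradiction.
  - rewrite <- m_contract_lift, m_contract_gc_contract. constructor; auto.
  - apply step_e, lsubst1_m_contract; auto.
  - apply step_esL; auto.
  - apply step_esR; auto.
Qed.

Lemma step_m_contract_r x u u' : is_answer x -> step u u' ->
  step (m_contract x u) (m_contract x u').
Proof.
  revert u u'; induction x; intros; simpl in *; try contradiction.
  - apply step_esR; auto.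
  - apply step_esL, IHx1, step_lift; auto.
Qed.

Lemma step_gc_contract_l x t t' : step t t' -> step (gc_contract t x) (gc_contract t' x).
Proof. revert t t'; induction x; intros; simpl; auto using step_esL, step_lift. Qed.

Lemma step_gc_contract_r x x' t : is_answer x -> step x x' ->
  step (gc_contract t x) (gc_contract t x').
Proof.
  intros Hx H; revert t Hx; induction H; intros t' Hx; simpl in *; try contradiction.
  - rewrite <- gc_contract_lift, <- gc_contract_assoc. constructor; auto.
  - apply step_e, lsubst1_gc_contract; auto.
  - apply step_esL; auto.
  - apply step_esR; auto.
Qed.

Lemma steps_answer x x' : steps x x' -> is_answer x -> is_answer x'.
Proof. induction 1; eauto using step_answer. Qed.

Lemma steps_m_contract x x' u u' : is_answer x -> steps x x' -> steps u u' ->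
  steps (m_contract x u) (m_contract x' u').
Proof.
  intros Hx H1 H2. apply rt_trans with (m_contract x' u).
  - apply (clos_rt_map _ _ is_answer (fun y => m_contract y u));
      eauto using step_answer, step_m_contract_l.
  - apply clos_rt_congr; eauto using step_m_contract_r, steps_answer.
Qed.

Lemma steps_gc_contract x x' t t' : is_answer x -> steps t t' -> steps x x' ->
  steps (gc_contract t x) (gc_contract t' x').
Proof.
  intros Hx H1 H2. apply rt_trans with (gc_contract t' x).
  - apply (clos_rt_congr (fun y => gc_contract y x)); auto using step_gc_contract_l.
  - apply (clos_rt_map _ _ is_answer); eauto using step_answer, step_gc_contract_r.
Qed.

Lemma steps1_m_contract_l x x' u : is_answer x -> steps1 x x' ->
  steps1 (m_contract x u) (m_contract x' u).
Proof.
  intros. apply (clos_t_map _ _ is_answer (fun y => m_contract y u));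
    eauto using step_answer, step_m_contract_l.
Qed.

Lemma steps1_m_contract_r x u u' : is_answer x -> steps1 u u' ->
  steps1 (m_contract x u) (m_contract x u').
Proof. intros. apply clos_t_congr; auto using step_m_contract_r. Qed.

Lemma steps1_gc_contract_l x t t' : steps1 t t' -> steps1 (gc_contract t x) (gc_contract t' x).
Proof. apply (clos_t_congr (fun y => gc_contract y x)). auto using step_gc_contract_l. Qed.

Lemma steps1_gc_contract_r x x' t : is_answer x -> steps1 x x' ->
  steps1 (gc_contract t x) (gc_contract t x').
Proof. intros. apply (clos_t_map _ _ is_answer); eauto using step_answer, step_gc_contract_r. Qed.

(** * Marked terms, developments and weights *)

(* Marked terms record the residuals of one contracted redex: [MVar true n]
   is a residual of the substituted occurrence, [MApp true x u] of an
   m-redex, and [MGc b x], which stands for [(lift 1 0 b)[y\x]], of a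
   gc-redex.  Abstraction bodies are never reduced, hence never marked. *)
Inductive mterm : Type :=
| MVar : bool -> nat -> mterm
| MLam : term -> mterm
| MApp : bool -> mterm -> mterm -> mterm
| MES : mterm -> mterm -> mterm
| MGc : mterm -> mterm -> mterm.

Fixpoint erase (T : mterm) : term :=
  match T with
  | MVar _ n => Var n
  | MLam t => Lam t
  | MApp _ X U => App (erase X) (erase U)
  | MES B U => ES (erase B) (erase U)
  | MGc B X => ES (lift 1 0 (erase B)) (erase X)
  end.

Fixpoint embed (t : term) : mterm :=
  match t with
  | Var n => MVar false n
  | Lam b => MLam b
  | App a b => MApp false (embed a) (embed b)
  | ES a b => MES (embed a) (embed b)
  end.

Fixpoint mlift (k c : nat) (T : mterm) : mterm :=
  match T with
  | MVar m n => MVar m (if c <=? n then n + k else n)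
  | MLam t => MLam (lift k (S c) t)
  | MApp m X U => MApp m (mlift k c X) (mlift k c U)
  | MES B U => MES (mlift k (S c) B) (mlift k c U)
  | MGc B X => MGc (mlift k c B) (mlift k c X)
  end.

Fixpoint mm_contract (X U : mterm) : mterm :=
  match X with
  | MLam b => MES (embed b) U
  | MES Y W => MES (mm_contract Y (mlift 1 0 U)) W
  | MGc Y W => MGc (mm_contract Y U) W
  | _ => MApp false X U
  end.

Fixpoint mgc_contract (B X : mterm) : mterm :=
  match X with
  | MLam _ => B
  | MES Y W => MES (mgc_contract (mlift 1 0 B) Y) W
  | MGc Y W => MGc (mgc_contract B Y) W
  | _ => MGc B X
  end.

Fixpoint valid (T : mterm) : Prop :=
  match T with
  | MVar _ _ | MLam _ => True
  | MApp m X U => (m = true -> is_answer (erase X)) /\ valid X /\ valid U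
  | MES B U => valid B /\ valid U
  | MGc B X => is_answer (erase X) /\ valid B /\ valid X
  end.

Lemma erase_embed t : erase (embed t) = t.
Proof. induction t; simpl; f_equal; auto. Qed.

Lemma erase_mlift T k c : erase (mlift k c T) = lift k c (erase T).
Proof.
  revert c; induction T; intros; simpl; nat_cases; f_equal; rewrite ?IHT1, ?lift1_lift; auto.
Qed.

Lemma erase_mlift_inv T k c t0 : erase T = lift k c t0 ->
  exists T0, T = mlift k c T0 /\ erase T0 = t0.
Proof.
  revert c t0; induction T; intros c t0 H; simpl in H; symmetry in H.
  - apply lift_inv_Var in H as [m [-> ->]]. exists (MVar b m). auto.
  - apply lift_inv_Lam in H as [b0 [-> ->]]. exists (MLam b0). auto.
  - apply lift_inv_App in H as [a0 [b0 [-> [Ha Hb]]]].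
    destruct (IHT1 c a0) as [X0 [-> <-]]; auto. destruct (IHT2 c b0) as [U0 [-> <-]]; auto.
    exists (MApp b X0 U0); auto.
  - apply lift_inv_ES in H as [a0 [b0 [-> [Ha Hb]]]].
    destruct (IHT1 (S c) a0) as [X0 [-> <-]]; auto. destruct (IHT2 c b0) as [U0 [-> <-]]; auto.
    exists (MES X0 U0); auto.
  - apply lift_inv_ES in H as [a0 [b0 [-> [Ha Hb]]]].
    destruct (lift1_lift_inv a0 (erase T1) k 0 c) as [y0 [-> Hy]]; auto.
    destruct (IHT1 c y0) as [X0 [-> <-]]; auto. destruct (IHT2 c b0) as [U0 [-> <-]]; auto.
    exists (MGc X0 U0); auto.
Qed.

Lemma erase_mm_contract X U : erase (mm_contract X U) = m_contract (erase X) (erase U).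
Proof.
  revert U; induction X; intros; simpl; rewrite ?erase_embed, ?IHX1, ?erase_mlift, ?m_contract_lift;
    auto.
Qed.

Lemma erase_mgc_contract X B : erase (mgc_contract B X) = gc_contract (erase B) (erase X).
Proof.
  revert B; induction X; intros; simpl; rewrite ?IHX1, ?erase_mlift, ?gc_contract_lift; auto.
Qed.

Lemma valid_embed t : valid (embed t).
Proof. induction t; simpl; intuition discriminate. Qed.

Lemma valid_mlift T k c : valid T -> valid (mlift k c T).
Proof.
  revert c; induction T; simpl; intros; rewrite ?erase_mlift; intuition auto using is_answer_lift.
Qed.

Lemma valid_mlift_inv T k c : valid (mlift k c T) -> valid T.
Proof.
  revert c; induction T; simpl; intros; rewrite ?erase_mlift in *;
    intuition eauto using is_answer_unlift.
Qed.

Lemma valid_mm_contract X U : valid X -> valid U -> valid (mm_contract X U).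
Proof.
  revert U; induction X; simpl; intros; intuition auto using valid_embed, valid_mlift; discriminate.
Qed.

Lemma valid_mgc_contract X B : is_answer (erase X) -> valid B -> valid X ->
  valid (mgc_contract B X).
Proof.
  revert B; induction X; simpl; intros; intuition auto using valid_mlift.
  apply IHX1; eauto using is_answer_unlift.
Qed.

Inductive mlsubst1 (m : bool) : nat -> mterm -> mterm -> mterm -> Prop :=
| mlsubst1_var k U : mlsubst1 m k U (MVar m k) (mlift (S k) 0 U)
| mlsubst1_appL k U m' X X' Y : mlsubst1 m k U X X' -> mlsubst1 m k U (MApp m' X Y) (MApp m' X' Y)
| mlsubst1_appR k U m' X Y Y' : mlsubst1 m k U Y Y' -> mlsubst1 m k U (MApp m' X Y) (MApp m' X Y')
| mlsubst1_esL k U X X' Y : mlsubst1 m (S k) U X X' -> mlsubst1 m k U (MES X Y) (MES X' Y)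
| mlsubst1_esR k U X Y Y' : mlsubst1 m k U Y Y' -> mlsubst1 m k U (MES X Y) (MES X Y')
| mlsubst1_gcL k U X X' Y : mlsubst1 m k U X X' -> mlsubst1 m k U (MGc X Y) (MGc X' Y)
| mlsubst1_gcR k U X Y Y' : mlsubst1 m k U Y Y' -> mlsubst1 m k U (MGc X Y) (MGc X Y').

Lemma lsubst1_App_inv k u a b c : lsubst1 k u (App a b) c ->
  (exists a', lsubst1 k u a a' /\ c = App a' b) \/ (exists b', lsubst1 k u b b' /\ c = App a b').
Proof. intros H; inversion H; subst; eauto. Qed.

Lemma lsubst1_ES_inv k u a b c : lsubst1 k u (ES a b) c ->
  (exists a', lsubst1 (S k) u a a' /\ c = ES a' b) \/ (exists b', lsubst1 k u b b' /\ c = ES a b').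
Proof. intros H; inversion H; subst; eauto. Qed.

Lemma lsubst1_mlsubst1 T k U b' : lsubst1 k (erase U) (erase T) b' ->
  exists m T1, mlsubst1 m k U T T1 /\ erase T1 = b'.
Proof.
  revert k b'; induction T as [m n | b | m X IHX Y IHY | X IHX Y IHY | X IHX Y IHY];
    intros k b' H; simpl in H.
  - inversion H; subst. exists m, (mlift (S n) 0 U). split; [constructor | apply erase_mlift].
  - inversion H.
  - apply lsubst1_App_inv in H as [[a' [Ha ->]] | [c' [Hc ->]]].
    + destruct (IHX _ _ Ha) as [m' [X1 [? <-]]].
      exists m', (MApp m X1 Y). split; [apply mlsubst1_appL|]; auto.
    + destruct (IHY _ _ Hc) as [m' [Y1 [? <-]]].
      exists m', (MApp m X Y1). split; [apply mlsubst1_appR|]; auto.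
  - apply lsubst1_ES_inv in H as [[a' [Ha ->]] | [c' [Hc ->]]].
    + destruct (IHX _ _ Ha) as [m [X1 [? <-]]].
      exists m, (MES X1 Y). split; [apply mlsubst1_esL|]; auto.
    + destruct (IHY _ _ Hc) as [m [Y1 [? <-]]].
      exists m, (MES X Y1). split; [apply mlsubst1_esR|]; auto.
  - apply lsubst1_ES_inv in H as [[a' [Ha ->]] | [c' [Hc ->]]].
    + destruct (lsubst1_unlift_low _ _ _ _ 0 Ha) as [t' [Ht ->]]; [lia|].
      destruct (IHX _ _ Ht) as [m [X1 [? <-]]].
      exists m, (MGc X1 Y). split; [apply mlsubst1_gcL|]; auto.
    + destruct (IHY _ _ Hc) as [m [Y1 [? <-]]].
      exists m, (MGc X Y1). split; [apply mlsubst1_gcR|]; auto.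
Qed.

Lemma mlsubst1_lsubst1 m k U T T1 : mlsubst1 m k U T T1 ->
  lsubst1 k (erase U) (erase T) (erase T1).
Proof.
  induction 1; simpl.
  - rewrite erase_mlift. constructor.
  - apply lsubst1_appL; auto.
  - apply lsubst1_appR; auto.
  - apply lsubst1_esL; auto.
  - apply lsubst1_esR; auto.
  - apply lsubst1_esL, lsubst1_lift_low; auto; lia.
  - apply lsubst1_esR; auto.
Qed.

Lemma valid_mlsubst1 m k U T T1 : mlsubst1 m k U T T1 -> valid U -> valid T -> valid T1.
Proof.
  induction 1; simpl; intros; intuition auto using valid_mlift;
    eapply lsubst1_answer; eauto using mlsubst1_lsubst1.
Qed.

Definition env := nat -> option term.

Definition ext (s : env) (u : term) : env :=
  fun i => match i with 0 => Some (lift 1 0 u) | S j => option_map (lift 1 0) (s j) end.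

(* The development of [T] in environment [s]: every marked redex is contracted,
   a marked variable [n] free in [T] is replaced by [s n] (kept if [s n = None]). *)
Fixpoint dev (s : env) (T : mterm) : term :=
  match T with
  | MVar true n => match s n with Some t => t | None => Var n end
  | MVar false n => Var n
  | MLam t => Lam t
  | MApp false X U => App (dev s X) (dev s U)
  | MApp true X U => m_contract (dev s X) (dev s U)
  | MES B U => ES (dev (ext s (dev s U)) B) (dev s U)
  | MGc B X => gc_contract (dev s B) (dev s X)
  end.

Definition env_lift (k c : nat) (s s' : env) : Prop :=
  forall i, s' (if i <? c then i else i + k) = option_map (lift k c) (s i).

Lemma env_lift_ext k c s s' a : env_lift k c s s' ->
  env_lift k (S c) (ext s a) (ext s' (lift k c a)).
Proof.
  intros H [|j]; simpl.
  - rewrite lift1_lift. auto.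
  - change (S j <? S c) with (j <? c). specialize (H j).
    destruct (j <? c); simpl in *; rewrite H; destruct (s j); simpl; rewrite ?lift1_lift; auto.
Qed.

Lemma env_lift_ext1 s a : env_lift 1 0 s (ext s a).
Proof. intros i. simpl. rewrite Nat.add_1_r. auto. Qed.

Lemma env_lift_ext_above k s0 s a : env_lift (S k) 0 s0 s ->
  env_lift (S (S k)) 0 s0 (ext s a).
Proof.
  intros H i. specialize (H i). simpl in *. replace (i + S (S k)) with (S (i + S k)) by lia.
  simpl. rewrite H. destruct (s0 i); simpl; rewrite ?lift_lift by lia; auto.
Qed.

Lemma dev_mlift T k c s s' : env_lift k c s s' -> dev s' (mlift k c T) = lift k c (dev s T).
Proof.
  revert c s s'; induction T as [[] n | | [] | |]; intros c s s' H; simpl.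
  - specialize (H n). nat_cases; try lia; rewrite H; destruct (s n); simpl; nat_cases; auto; lia.
  - nat_cases; simpl; nat_cases; auto; lia.
  - auto.
  - rewrite (IHT1 c s s'), (IHT2 c s s'), m_contract_lift; auto.
  - rewrite (IHT1 c s s'), (IHT2 c s s'); auto.
  - rewrite (IHT2 c s s'), (IHT1 (S c) (ext s (dev s T2))); auto using env_lift_ext.
  - rewrite (IHT1 c s s'), (IHT2 c s s'), gc_contract_lift; auto.
Qed.

Lemma dev_mlift1 T s a : dev (ext s a) (mlift 1 0 T) = lift 1 0 (dev s T).
Proof. apply dev_mlift, env_lift_ext1. Qed.

Lemma dev_embed t s : dev s (embed t) = t.
Proof. revert s; induction t; intros; simpl; f_equal; auto. Qed.

Lemma dev_answer X s : is_answer (erase X) -> is_answer (dev s X).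
Proof.
  revert s; induction X; intros s H; simpl in *; try contradiction; auto.
  apply is_answer_gc_contract, IHX1. eapply is_answer_unlift; eauto.
Qed.

Lemma dev_mm_contract X U s : is_answer (erase X) ->
  dev s (mm_contract X U) = m_contract (dev s X) (dev s U).
Proof.
  revert U s; induction X; intros U s H; simpl in *; try contradiction.
  - rewrite dev_embed. auto.
  - rewrite IHX1, dev_mlift1; auto.
  - rewrite IHX1, m_contract_gc_contract; eauto using is_answer_unlift.
Qed.

Lemma dev_mgc_contract X B s : is_answer (erase X) ->
  dev s (mgc_contract B X) = gc_contract (dev s B) (dev s X).
Proof.
  revert B s; induction X; intros B s H; simpl in *; try contradiction.
  - auto.
  - rewrite IHX1, dev_mlift1; auto.
  - rewrite IHX1, gc_contract_assoc; eauto using is_answer_unlift.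
Qed.

(* Substituting a marked occurrence is already performed by the development. *)
Lemma dev_mlsubst1_marked k U T T1 s s0 : mlsubst1 true k U T T1 ->
  s k = Some (lift (S k) 0 (dev s0 U)) -> env_lift (S k) 0 s0 s -> dev s T1 = dev s T.
Proof.
  intros H; revert s; induction H; intros s Hk Hs; simpl.
  - rewrite Hk. apply dev_mlift; auto.
  - destruct m'; rewrite IHmlsubst1; auto.
  - destruct m'; rewrite IHmlsubst1; auto.
  - rewrite IHmlsubst1; auto using env_lift_ext_above.
    simpl. rewrite Hk. simpl. rewrite lift_lift by lia. auto.
  - rewrite IHmlsubst1; auto.
  - rewrite IHmlsubst1; auto.
  - rewrite IHmlsubst1; auto.
Qed.

Definition wext (r : nat -> nat) (n : nat) : nat -> nat :=
  fun i => match i with 0 => n | S j => r j end.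

(* Every marked redex counts one, and a marked variable [n] counts one more
   than [r n], the weight of the substitution it will receive. *)
Fixpoint weight (r : nat -> nat) (T : mterm) : nat :=
  match T with
  | MVar true n => S (r n)
  | MVar false _ | MLam _ => 0
  | MApp m X U => (if m then 1 else 0) + weight r X + weight r U
  | MES B U => weight (wext r (weight r U)) B + weight r U
  | MGc B X => 1 + weight r B + weight r X
  end.

Lemma weight_mlift T k c r r' : (forall i, r' (if i <? c then i else i + k) = r i) ->
  weight r' (mlift k c T) = weight r T.
Proof.
  revert c r r'; induction T as [[] n | | | |]; intros c r r' H; simpl; auto.
  - specialize (H n). nat_cases; try lia; rewrite H; auto.
  - rewrite (IHT2 c r r') by auto. f_equal. apply IHT1.
    intros [|j]; simpl; auto. change (S j <? S c) with (j <? c).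
    specialize (H j). destruct (j <? c); auto.
Qed.

Lemma weight_mlift1 T r n : weight (wext r n) (mlift 1 0 T) = weight r T.
Proof. apply weight_mlift. intros i; simpl. rewrite Nat.add_1_r. auto. Qed.

Lemma weight_mono T r r' : (forall i, r i <= r' i) -> weight r T <= weight r' T.
Proof.
  revert r r'; induction T as [[] n | | | T1 IHT1 T2 IHT2 |]; intros r r' H; simpl;
    auto using Nat.add_le_mono, le_n_S.
  apply Nat.add_le_mono; auto. apply IHT1. intros [|j]; simpl; auto.
Qed.

Lemma weight_embed t r : weight r (embed t) = 0.
Proof. revert r; induction t; intros; simpl; rewrite ?IHt1, ?IHt2; auto. Qed.

Lemma weight_mm_contract X U r : is_answer (erase X) ->
  weight r (mm_contract X U) = weight r X + weight r U.
Proof.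
  revert U r; induction X; intros U r H; simpl in *; try contradiction.
  - rewrite weight_embed. auto.
  - rewrite IHX1, weight_mlift1 by auto. lia.
  - rewrite IHX1 by eauto using is_answer_unlift. lia.
Qed.

Lemma weight_mgc_contract X B r : is_answer (erase X) ->
  weight r (mgc_contract B X) = weight r B + weight r X.
Proof.
  revert B r; induction X; intros B r H; simpl in *; try contradiction.
  - lia.
  - rewrite IHX1, weight_mlift1 by auto. lia.
  - rewrite IHX1 by eauto using is_answer_unlift. lia.
Qed.

Lemma weight_mlsubst1_marked k U T T1 r r0 : mlsubst1 true k U T T1 ->
  r k = weight r0 U -> (forall i, r (i + S k) = r0 i) -> weight r T1 < weight r T.
Proof.
  intros H; revert r; induction H; intros r Hk Hs; simpl.
  - rewrite (weight_mlift U (S k) 0 r0 r); auto. lia.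
  - specialize (IHmlsubst1 r Hk Hs). destruct m'; lia.
  - specialize (IHmlsubst1 r Hk Hs). destruct m'; lia.
  - enough (weight (wext r (weight r Y)) X' < weight (wext r (weight r Y)) X) by lia.
    apply IHmlsubst1; simpl; auto.
    intros i. rewrite <- Hs. replace (i + S (S k)) with (S (i + S k)) by lia. auto.
  - specialize (IHmlsubst1 r Hk Hs).
    enough (weight (wext r (weight r Y')) X <= weight (wext r (weight r Y)) X) by lia.
    apply weight_mono. intros [|j]; simpl; lia.
  - specialize (IHmlsubst1 r Hk Hs). lia.
  - specialize (IHmlsubst1 r Hk Hs). lia.
Qed.

Definition env_rel (R : relation term) (s s' : env) : Prop :=
  forall i, match s i, s' i with
            | Some a, Some b => R a b
            | None, None => True
            | _, _ => False
            end.

Lemma env_rel_ext (R : relation term) s s' a a' :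
  (forall x y, R x y -> R (lift 1 0 x) (lift 1 0 y)) ->
  env_rel R s s' -> R a a' -> env_rel R (ext s a) (ext s' a').
Proof.
  intros HR H Ha [|j]; simpl; auto.
  specialize (H j). destruct (s j), (s' j); simpl in *; auto.
Qed.

Lemma dev_env_steps T s s' : valid T -> env_rel steps s s' -> steps (dev s T) (dev s' T).
Proof.
  revert s s'; induction T as [[] n | | [] | |]; intros s s' HV H; simpl in *.
  - specialize (H n). destruct (s n), (s' n); try contradiction; auto using rt_refl.
  - apply rt_refl.
  - apply rt_refl.
  - destruct HV as [Hm [HX HU]]. apply steps_m_contract; auto using dev_answer.
  - destruct HV as [_ [HX HU]]. apply steps_App; auto.
  - destruct HV as [HB HU]. apply steps_ES; auto.
    apply IHT1; auto. apply env_rel_ext; auto using steps_lift.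
  - destruct HV as [HX [HB HU]]. apply steps_gc_contract; auto using dev_answer.
Qed.

Lemma dev_env_lsubstn T k z s s' : valid T ->
  env_rel (fun a b => exists n, lsubstn k z n a b) s s' ->
  exists n, lsubstn k z n (dev s T) (dev s' T).
Proof.
  revert k s s'; induction T as [[] n | | [] | |]; intros k s s' HV H; simpl in *.
  - specialize (H n). destruct (s n), (s' n); try contradiction; eauto using lsubstn_refl.
  - eauto using lsubstn_refl.
  - eauto using lsubstn_refl.
  - destruct HV as [Hm [HX HU]].
    destruct (IHT1 k s s' HX H) as [n1 ?], (IHT2 k s s' HU H) as [n2 ?].
    exists (n1 + n2). apply lsubstn_m_contract; auto using dev_answer.
  - destruct HV as [_ [HX HU]].
    destruct (IHT1 k s s' HX H) as [n1 ?], (IHT2 k s s' HU H) as [n2 ?].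
    exists (n1 + n2). constructor; auto.
  - destruct HV as [HB HU].
    destruct (IHT2 k s s' HU H) as [n2 ?].
    destruct (IHT1 (S k) (ext s (dev s T2)) (ext s' (dev s' T2)) HB) as [n1 ?].
    { intros [|j]; simpl; eauto using lsubstn_lift1.
      specialize (H j). destruct (s j), (s' j); simpl in *; auto.
      destruct H as [n ?]. eauto using lsubstn_lift1. }
    exists (n1 + n2). constructor; auto.
  - destruct HV as [HX [HB HU]].
    destruct (IHT1 k s s' HB H) as [n1 ?], (IHT2 k s s' HU H) as [n2 ?].
    exists (n1 + n2). apply lsubstn_gc_contract; auto using dev_answer.
Qed.

(* An unmarked occurrence survives in every development, where it stands for
   at least one occurrence of the development of the substitution. *)
Lemma dev_mlsubst1_unmarked k U T T1 s s0 : mlsubst1 false k U T T1 -> valid T ->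
  env_lift (S k) 0 s0 s -> exists n, lsubstn k (dev s0 U) (S n) (dev s T) (dev s T1).
Proof.
  intros H; revert s; induction H as [k U | k U m X X' Y _ IH | k U m X Y Y' _ IH
    | k U X X' Y _ IH | k U X Y Y' _ IH | k U X X' Y _ IH | k U X Y Y' _ IH];
    intros s HV Hs; simpl in *.
  - exists 0. rewrite (dev_mlift U (S k) 0 s0 s) by auto. constructor.
  - destruct HV as [Hm [HX HY]]. destruct (IH s HX Hs) as [n ?]. exists n.
    apply (lsubstn_cast _ _ (S n + 0)); [|lia]. destruct m.
    + apply lsubstn_m_contract; auto using lsubstn_refl, dev_answer.
    + constructor; auto using lsubstn_refl.
  - destruct HV as [Hm [HX HY]]. destruct (IH s HY Hs) as [n ?]. exists n.
    apply (lsubstn_cast _ _ (0 + S n)); [|lia]. destruct m.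
    + apply lsubstn_m_contract; auto using lsubstn_refl, dev_answer.
    + constructor; auto using lsubstn_refl.
  - destruct HV as [HX HY]. destruct (IH (ext s (dev s Y)) HX) as [n ?].
    { apply env_lift_ext_above; auto. }
    exists n. apply (lsubstn_cast _ _ (S n + 0)); [|lia]. constructor; auto using lsubstn_refl.
  - destruct HV as [HX HY]. destruct (IH s HY Hs) as [n ?].
    destruct (dev_env_lsubstn X (S k) (dev s0 U) (ext s (dev s Y)) (ext s (dev s Y')) HX)
      as [n1 ?].
    { intros [|j]; simpl; eauto using lsubstn_lift1.
      destruct (s j); simpl; eauto using lsubstn_refl. }
    exists (n1 + n). apply (lsubstn_cast _ _ (n1 + S n)); [|lia]. constructor; auto.
  - destruct HV as [HY [HX HB]]. destruct (IH s HX Hs) as [n ?]. exists n.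
    apply (lsubstn_cast _ _ (S n + 0)); [|lia].
    apply lsubstn_gc_contract; auto using lsubstn_refl, dev_answer.
  - destruct HV as [HY [HX HB]]. destruct (IH s HB Hs) as [n ?]. exists n.
    apply (lsubstn_cast _ _ (0 + S n)); [|lia].
    apply lsubstn_gc_contract; auto using lsubstn_refl, dev_answer.
Qed.

(** * Conservation *)

Definition lex_decrease (T T1 : mterm) : Prop :=
  ((forall s, dev s T1 = dev s T) /\ (forall r, weight r T1 < weight r T))
  \/ (forall s, steps1 (dev s T) (dev s T1)).

Lemma lex_decrease_appL m X X1 U : (m = true -> is_answer (erase X)) ->
  lex_decrease X X1 -> lex_decrease (MApp m X U) (MApp m X1 U).
Proof.
  intros Hm [[Hd Hw] | Hd]; [left | right]; simpl.
  - split; intros; [rewrite Hd; auto | specialize (Hw r); destruct m; lia].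
  - intros s. destruct m; auto using steps1_appL, steps1_m_contract_l, dev_answer.
Qed.

Lemma lex_decrease_appR m X U U1 : (m = true -> is_answer (erase X)) ->
  lex_decrease U U1 -> lex_decrease (MApp m X U) (MApp m X U1).
Proof.
  intros Hm [[Hd Hw] | Hd]; [left | right]; simpl.
  - split; intros; [rewrite Hd; auto | specialize (Hw r); destruct m; lia].
  - intros s. destruct m; auto using steps1_appR, steps1_m_contract_r, dev_answer.
Qed.

Lemma lex_decrease_esL B B1 U : lex_decrease B B1 -> lex_decrease (MES B U) (MES B1 U).
Proof.
  intros [[Hd Hw] | Hd]; [left | right]; simpl.
  - split; intros; [rewrite Hd; auto | specialize (Hw (wext r (weight r U))); lia].
  - auto using steps1_esL.
Qed.

Lemma lex_decrease_esR B U U1 : valid B ->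
  lex_decrease U U1 -> lex_decrease (MES B U) (MES B U1).
Proof.
  intros HB [[Hd Hw] | Hd]; [left | right]; simpl.
  - split; intros; [rewrite Hd; auto|]. specialize (Hw r).
    enough (weight (wext r (weight r U1)) B <= weight (wext r (weight r U)) B) by lia.
    apply weight_mono. intros [|j]; simpl; lia.
  - intros s. apply clos_rt_t with (ES (dev (ext s (dev s U1)) B) (dev s U)).
    + apply steps_ES; [|apply rt_refl]. apply dev_env_steps; auto.
      apply env_rel_ext; auto using steps_lift.
      * intros j. destruct (s j); auto using rt_refl.
      * apply clos_t_clos_rt; auto.
    + apply steps1_esR; auto.
Qed.

Lemma lex_decrease_gcL B B1 X : lex_decrease B B1 -> lex_decrease (MGc B X) (MGc B1 X).
Proof.
  intros [[Hd Hw] | Hd]; [left | right]; simpl.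
  - split; intros; [rewrite Hd; auto | specialize (Hw r); lia].
  - auto using steps1_gc_contract_l.
Qed.

Lemma lex_decrease_gcR B X X1 : is_answer (erase X) ->
  lex_decrease X X1 -> lex_decrease (MGc B X) (MGc B X1).
Proof.
  intros HX [[Hd Hw] | Hd]; [left | right]; simpl.
  - split; intros; [rewrite Hd; auto | specialize (Hw r); lia].
  - auto using steps1_gc_contract_r, dev_answer.
Qed.

Lemma lex_decrease_m m X U : is_answer (erase X) -> lex_decrease (MApp m X U) (mm_contract X U).
Proof.
  intros HX. destruct m; [left | right]; simpl.
  - split; intros; [apply dev_mm_contract | rewrite weight_mm_contract]; auto.
  - intros s. rewrite dev_mm_contract by auto. apply t_step, step_m, dev_answer; auto.
Qed.

Lemma lex_decrease_gc_marked B X : is_answer (erase X) ->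
  lex_decrease (MGc B X) (mgc_contract B X).
Proof.
  intros HX. left; simpl.
  split; intros; [apply dev_mgc_contract | rewrite weight_mgc_contract]; auto.
Qed.

Lemma lex_decrease_gc_unmarked B X : is_answer (erase X) ->
  lex_decrease (MES (mlift 1 0 B) X) (mgc_contract B X).
Proof.
  intros HX. right. intros s; simpl.
  rewrite dev_mlift1, dev_mgc_contract by auto. apply t_step, step_gc, dev_answer; auto.
Qed.

Lemma lex_decrease_e m B B1 U : mlsubst1 m 0 U B B1 -> valid B ->
  lex_decrease (MES B U) (MES B1 U).
Proof.
  intros H HB. destruct m; [left | right]; simpl.
  - split; intros.
    + f_equal. apply (dev_mlsubst1_marked 0 U B B1 _ s H); auto using env_lift_ext1.
    + enough (weight (wext r (weight r U)) B1 < weight (wext r (weight r U)) B) by lia.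
      apply (weight_mlsubst1_marked 0 U B B1 _ r H); auto.
      intros i. simpl. rewrite Nat.add_1_r. auto.
  - intros s. destruct (dev_mlsubst1_unmarked 0 U B B1 (ext s (dev s U)) s H HB) as [n ?].
    + apply env_lift_ext1.
    + eapply lsubstn_steps1; eauto.
Qed.

Lemma step_App_inv a b c : step (App a b) c ->
  (is_answer a /\ c = m_contract a b) \/
  (exists a', step a a' /\ c = App a' b) \/ (exists b', step b b' /\ c = App a b').
Proof. intros H; inversion H; subst; eauto. Qed.

Lemma step_ES_inv a b c : step (ES a b) c ->
  (exists t, a = lift 1 0 t /\ is_answer b /\ c = gc_contract t b) \/
  (exists a', lsubst1 0 b a a' /\ c = ES a' b) \/
  (exists a', step a a' /\ c = ES a' b) \/ (exists b', step b b' /\ c = ES a b').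
Proof. intros H; inversion H; subst; eauto 7. Qed.

Lemma step_marked T t1 : valid T -> step (erase T) t1 ->
  exists T1, erase T1 = t1 /\ valid T1 /\ lex_decrease T T1.
Proof.
  revert t1; induction T as [m n | b | m X IHX U IHU | B IHB U IHU | B IHB X IHX];
    intros t1 HV H; simpl in *.
  - inversion H.
  - inversion H.
  - destruct HV as [Hm [HX HU]].
    apply step_App_inv in H as [[Hans ->] | [[a' [Ha ->]] | [b' [Hb ->]]]].
    + exists (mm_contract X U). rewrite erase_mm_contract.
      auto using valid_mm_contract, lex_decrease_m.
    + destruct (IHX a' HX Ha) as [X1 [<- [HX1 Hd]]].
      exists (MApp m X1 U). simpl. intuition eauto using step_answer, lex_decrease_appL.
    + destruct (IHU b' HU Hb) as [U1 [<- [HU1 Hd]]].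
      exists (MApp m X U1). simpl. intuition auto using lex_decrease_appR.
  - destruct HV as [HB HU].
    apply step_ES_inv in H as [[t [Ht [Hans ->]]] | [[a' [Ha ->]] | [[a' [Ha ->]] | [b' [Hb ->]]]]].
    + destruct (erase_mlift_inv B 1 0 t Ht) as [B0 [-> <-]].
      exists (mgc_contract B0 U). rewrite erase_mgc_contract.
      eauto 6 using valid_mgc_contract, valid_mlift_inv, lex_decrease_gc_unmarked.
    + destruct (lsubst1_mlsubst1 B 0 U a' Ha) as [m [B1 [HB1 <-]]].
      exists (MES B1 U). simpl. intuition eauto using valid_mlsubst1, lex_decrease_e.
    + destruct (IHB a' HB Ha) as [B1 [<- [HB1 Hd]]].
      exists (MES B1 U). simpl. intuition auto using lex_decrease_esL.
    + destruct (IHU b' HU Hb) as [U1 [<- [HU1 Hd]]].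
      exists (MES B U1). simpl. intuition auto using lex_decrease_esR.
  - destruct HV as [HX [HB HX']].
    apply step_ES_inv in H as [[t [Ht [Hans ->]]] | [[a' [Ha ->]] | [[a' [Ha ->]] | [b' [Hb ->]]]]].
    + apply lift_inj in Ht as <-.
      exists (mgc_contract B X). rewrite erase_mgc_contract.
      auto using valid_mgc_contract, lex_decrease_gc_marked.
    + exfalso. eapply lsubst1_lift_absent, Ha.
    + destruct (step_unlift _ _ 1 0 Ha) as [t0 [-> Ht]].
      destruct (IHB t0 HB Ht) as [B1 [<- [HB1 Hd]]].
      exists (MGc B1 X). simpl. intuition auto using lex_decrease_gcL.
    + destruct (IHX b' HX' Hb) as [X1 [<- [HX1 Hd]]].
      exists (MGc B X1). simpl. intuition eauto using step_answer, lex_decrease_gcR.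
Qed.

Lemma mark_lsubst1 k u b b' : lsubst1 k u b b' -> exists M, erase M = b /\ valid M /\
  forall s : env, s k = Some (lift (S k) 0 u) -> dev s M = b'.
Proof.
  induction 1 as [k u | k u a a' b _ IH | k u a b b' _ IH | k u a a' b _ IH | k u a b b' _ IH];
    try destruct IH as [M [<- [HM Hdev]]];
    [ exists (MVar true k)
    | exists (MApp false M (embed b))
    | exists (MApp false (embed a) M)
    | exists (MES M (embed b))
    | exists (MES (embed a) M) ].
  all: simpl; rewrite ?erase_embed; repeat split; auto using valid_embed; try discriminate.
  all: intros s Hs; rewrite ?Hs, ?dev_embed, ?Hdev; auto.
  simpl. rewrite Hs. simpl. rewrite lift_lift by lia. auto.
Qed.

Lemma mark_step t t' : step t t' -> exists T, erase T = t /\ valid T /\ forall s, dev s T = t'.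
Proof.
  induction 1 as [x u Hx | t x Hx | b b' u Hb | a a' b _ IH | a b b' _ IH | a a' b _ IH
                 | a b b' _ IH]; try destruct IH as [M [<- [HM Hdev]]];
    try destruct (mark_lsubst1 _ _ _ _ Hb) as [M [<- [HM Hdev]]];
    [ exists (MApp true (embed x) (embed u))
    | exists (MGc (embed t) (embed x))
    | exists (MES M (embed u))
    | exists (MApp false M (embed b))
    | exists (MApp false (embed a) M)
    | exists (MES M (embed b))
    | exists (MES (embed a) M) ].
  all: simpl; rewrite ?erase_embed; repeat split; auto using valid_embed; try discriminate.
  all: intros s; rewrite ?dev_embed, ?Hdev; auto.
Qed.

Definition SN : term -> Prop := Acc (transp term step).

Lemma SN_steps1 t : SN t -> Acc (transp term steps1) t.
Proof.
  intros H. apply Acc_clos_trans in H.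
  eapply Acc_incl; [|exact H]. intros x y. apply clos_trans_transp_permute.
Qed.

Lemma SN_dev_SN_erase T : valid T -> Acc (transp term steps1) (dev (fun _ => None) T) ->
  SN (erase T).
Proof.
  intros HV Hacc. remember (dev (fun _ => None) T) as t eqn:Ht. revert T HV Ht.
  induction Hacc as [t _ IHdev]. intros T.
  induction T as [T IHweight] using (induction_ltof1 _ (weight (fun _ => 0))).
  intros HV ->. constructor. intros t1 Hstep.
  destruct (step_marked T t1 HV Hstep) as [T1 [<- [HV1 [[Hd Hw] | Hd]]]].
  - apply IHweight; auto. apply Hw.
  - apply (IHdev (dev (fun _ => None) T1)); auto. apply Hd.
Qed.

Lemma SN_expand t t' : step t t' -> SN t' -> SN t.
Proof.
  intros H Ht'. destruct (mark_step t t' H) as [T [<- [HV Hdev]]].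
  apply SN_dev_SN_erase; auto. rewrite Hdev. apply SN_steps1; auto.
Qed.

Lemma strongly_normalizing_SN t : strongly_normalizing t <-> SN t.
Proof.
  split; intros H; induction H as [x _ IH]; constructor; intros y Hy; apply IH.
  - apply step_wstep, Hy.
  - apply wstep_step, Hy.
Qed.

Lemma weakly_normalizing_SN t : weakly_normalizing t -> SN t.
Proof.
  intros [t' [Hr Hn]]. apply clos_rt_rt1n in Hr.
  induction Hr as [t | t y t' Hty _ IH]; auto.
  - constructor. intros y Hy. destruct Hn. exists y. apply step_wstep; auto.
  - apply SN_expand with y; auto using wstep_step.
Qed.

Lemma strongly_normalizing_WN t : strongly_normalizing t -> weakly_normalizing t.
Proof.
  induction 1 as [t _ IH].
  destruct (classic (exists t', wstep t t')) as [[t' Ht'] | Hn].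
  - destruct (IH t' Ht') as [u [Hr Hu]]. exists u. split; auto.
    apply rt_trans with t'; auto using rt_step.
  - exists t. split; auto using rt_refl.
Qed.

Theorem corollary6p6 : forall t : term, weakly_normalizing t <-> strongly_normalizing t.
Proof.
  intros t. split.
  - intros H. apply strongly_normalizing_SN, weakly_normalizing_SN, H.
  - apply strongly_normalizing_WN.
Qed.
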